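(* If $\mathfrak{h}$ is a finite-dimensional complex Lie algebra, then $\mathcal{R}^i_1(\mathcal{C}^\bullet\mathfrak{h})$ is finite for all $i$. In particular, the cdga $\mathcal{C}^\bullet\mathfrak{h}$ has trivial resonance in degree $i$ (i.e. $0$ is an isolated point of $\mathcal{R}^i_1(\mathcal{C}^\bullet\mathfrak{h})$) whenever $H^i(\mathfrak{h})\neq 0$.
   Context: $\mathcal{C}^\bullet\mathfrak{h}=(\bigwedge^\bullet\mathfrak{h}^*,d)$ is the Chevalley–Eilenberg cochain cdga of $\mathfrak{h}$, with cohomology $H^\bullet(\mathfrak{h})$ (Lie algebra cohomology with trivial coefficients $\mathbb{C}$). For $\omega\in H^1(\mathfrak{h})=\mathrm{Hom}(\mathfrak{h}/[\mathfrak{h},\mathfrak{h}],\mathbb{C})$, ${}_\omega\mathbb{C}$ denotes the one-dimensional $\mathfrak{h}$-module on which $x$ acts by $\omega(x)$; then $\mathcal{R}^i_r(\mathcal{C}^\bullet\mathfrak{h})=\{\omega\in H^1(\mathfrak{h}):\dim H^i(\mathfrak{h},{}_\omega\mathbb{C})\ge r\}$ (equivalently, the set of closed $\omega\in\mathfrak{h}^*$ for which the complex $(\bigwedge^\bullet\mathfrak{h}^*, d+\omega\wedge\cdot)$ has $i$-th cohomology of dimension $\ge r$). *)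

From HB Require Import structures.
From mathcomp Require Import all_boot all_order all_algebra.
From mathcomp Require Import complex.
From mathcomp Require Import reals.
Set Implicit Arguments. Unset Strict Implicit. Unset Printing Implicit Defensive.
Import Order.TTheory GRing.Theory Num.Theory.
Local Open Scope ring_scope.

(* A finite-dimensional Lie algebra over a field F, realised on F^n = 'rV[F]_n
   (every finite-dimensional Lie algebra is isomorphic to one of these). *)
Record lie_alg (F : fieldType) (n : nat) := LieAlg {
  lbr : 'rV[F]_n -> 'rV[F]_n -> 'rV[F]_n;
  lbr_linl : forall y, linear (lbr ^~ y);
  lbr_linr : forall x, linear (lbr x);
  lbr_alt : forall x, lbr x x = 0;
  lbr_jacobi : forall x y z,
      lbr x (lbr y z) + lbr y (lbr z x) + lbr z (lbr x y) = 0
}.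

Section CE.
Variables (F : fieldType) (n : nat) (h : lie_alg F n).

Definition sconst (a b l : 'I_n) : F :=
  lbr h (delta_mx 0 a) (delta_mx 0 b) 0 l.

(* i-element subsets of {0..n-1}: they index the standard basis e^S of
   \bigwedge^i h^* (S = {s_1 < ... < s_i}, e^S = e^{s_1} /\ ... /\ e^{s_i}) *)
Definition ksub (i : nat) := {S : {set 'I_n} | #|S| == i}.

(* i-cochains: elements of \bigwedge^i h^*, in coordinates on the basis e^S,
   i.e. f S = value of the alternating form on (e_{s_1},...,e_{s_i}) *)
Definition cochain (i : nat) := {ffun ksub i -> F^o}.

Definition cev (i : nat) (f : cochain i) (S : {set 'I_n}) : F :=
  if insub S is Some T then f T else 0.

Definition sgn_below (S : {set 'I_n}) (a : 'I_n) : F :=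
  (-1) ^+ #|[set x in S | (x < a)%N]|.

(* value f(e_l, e_{t_1}, ..., e_{t_m}) for T = {t_1 < ... < t_m} *)
Definition cev_ins (i : nat) (f : cochain i) (l : 'I_n) (T : {set 'I_n}) : F :=
  if l \in T then 0 else sgn_below T l * cev f (l |: T).

(* Chevalley--Eilenberg differential with coefficients in  _w C, where
   w : 'rV_n gives the functional omega(x) = \sum_j x_j w_j :
   (df)(x_0..x_i) = \sum_j (-1)^j omega(x_j) f(..^x_j..)
                   + \sum_{j<k} (-1)^(j+k) f([x_j,x_k], ..^x_j..^x_k..)   *)
Definition ce_diff_fun (w : 'rV[F]_n) (i : nat) (f : cochain i) : cochain i.+1 :=
  [ffun S : ksub i.+1 =>
     \sum_(a in val S) sgn_below (val S) a * w 0 a * cev f (val S :\ a)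
   + \sum_(a in val S) \sum_(b in val S | (a < b)%N)
        sgn_below (val S) a * sgn_below (val S) b *
        \sum_l sconst a b l * cev_ins f l (val S :\ a :\ b)].

Definition ce_diff (w : 'rV[F]_n) (i : nat) : 'Hom(cochain i, cochain i.+1) :=
  linfun (@ce_diff_fun w i).

Definition cohom_dim (w : 'rV[F]_n) (i : nat) : nat :=
  (\dim (lker (ce_diff w i)) -
   match i with 0 => 0 | i'.+1 => \dim (limg (ce_diff w i')) end)%N.

Definition closed1 (w : 'rV[F]_n) : Prop :=
  forall x y : 'rV[F]_n, \sum_l lbr h x y 0 l * w 0 l = 0.

(* resonance variety R^i_r(C^. h) as a subset of H^1(h) = closed functionals *)
Definition resonance (i r : nat) (w : 'rV[F]_n) : Prop :=
  closed1 w /\ (r <= cohom_dim w i)%N.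

End CE.

Definition finite_set (T : eqType) (P : T -> Prop) : Prop :=
  exists s : seq T, forall x, P x -> x \in s.

Definition isolated_pt (R : rcfType) (n : nat) (P : 'rV[R[i]]_n -> Prop)
    (x : 'rV[R[i]]_n) : Prop :=
  P x /\ exists eps : R[i], 0 < eps /\
    forall y, P y -> (forall j, `|y 0 j - x 0 j| < eps) -> y = x.

From HB Require Import structures.
From mathcomp Require Import all_boot all_order all_algebra.
From mathcomp Require Import complex.
From mathcomp Require Import reals.
From mathcomp Require Import ring.
Import VectorInternalTheory.
Set Implicit Arguments. Unset Strict Implicit. Unset Printing Implicit Defensive.
Import Order.TTheory GRing.Theory Num.Theory.
Local Open Scope ring_scope.

(* Let d_w be the differential twisted by w, iota_j the contraction by the
   basis vector e_j, and theta_j = d_0 iota_j + iota_j d_0. Since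
   d_w = d_0 + (w /\ _) and (w /\ _) iota_j + iota_j (w /\ _) = w(e_j),
   the Cartan formula gives d_w iota_j + iota_j d_w = theta_j + w(e_j).
   This operator maps closed cochains to exact ones, so H^i(h, _w C) = 0
   as soon as it is injective on C^i. Hence every coordinate w(e_j) of a
   resonant w is minus an eigenvalue of theta_j on C^i: the resonance
   variety lies in a finite grid, so it is finite and each of its points
   is isolated. *)

Section ExteriorAlgebra.
Variables (F : fieldType) (n : nat).
Implicit Types (S T : {set 'I_n}) (a j : 'I_n) (w : 'rV[F]_n).
Implicit Types (g : {set 'I_n} -> F).

Lemma sgn_belowU1 T j a : j \notin T ->
  sgn_below F (j |: T) a = (if (j < a)%N then -1 else 1) * sgn_below F T a.
Proof.
move=> jT; rewrite /sgn_below; case: ifP => ja.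
  rewrite (_ : [set x in j |: T | (x < a)%N] = j |: [set x in T | (x < a)%N]).
    by rewrite cardsU1 inE (negbTE jT) /= add1n exprS.
  by apply/setP => x; rewrite !inE; case: eqP => // ->; rewrite ?ja ?andbF ?orbT.
rewrite mul1r (_ : [set x in j |: T | (x < a)%N] = [set x in T | (x < a)%N]) //.
by apply/setP => x; rewrite !inE; case: eqP => // ->; rewrite ?ja ?andbF.
Qed.

Lemma sgn_belowD1 T j a : a \in T ->
  sgn_below F T j = (if (a < j)%N then -1 else 1) * sgn_below F (T :\ a) j.
Proof. by move=> aT; rewrite -{1}(setD1K aT) sgn_belowU1 // !inE eqxx. Qed.

Lemma sgn_below_sqr T a : sgn_below F T a * sgn_below F T a = 1.
Proof. by rewrite /sgn_below -exprD addnn -mul2n exprM sqrrN !expr1n. Qed.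

(* Set functions [g] stand for forms through their values [g S] on the basis
   vectors [e^S]; [wedge_fun w] is left multiplication by the 1-form [w] and
   [contract_fun j] the contraction by [e_j]. *)
Definition wedge_fun w g S : F :=
  \sum_(a in S) sgn_below F S a * w 0 a * g (S :\ a).

Definition contract_fun j g T : F :=
  if j \in T then 0 else sgn_below F T j * g (j |: T).

Lemma wedge_contract_anticomm w g j T :
  contract_fun j (wedge_fun w g) T + wedge_fun w (contract_fun j g) T
  = w 0 j * g T.
Proof.
rewrite /contract_fun /wedge_fun; case: ifP => jT.
  rewrite add0r (bigD1 j) //= setD11 big1 ?addr0.
    have -> : sgn_below F (T :\ j) j = sgn_below F T j.
      by rewrite (sgn_belowD1 _ jT) ltnn mul1r.
    by rewrite setD1K // -[RHS]mul1r -(sgn_below_sqr T j); ring.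
  by move=> a /andP[_ aj]; rewrite !inE eq_sym aj jT mulr0.
rewrite (bigD1 j) ?setU11 //= setU1K ?jT // sgn_belowU1 ?jT // ltnn mul1r.
rewrite mulrDr !mulrA sgn_below_sqr mul1r -addrA [X in _ + X](_ : _ = 0) ?addr0 //.
rewrite (eq_bigl (mem T)); last first.
  by move=> a; rewrite !inE; case: eqP => [->|_]; rewrite ?jT ?andbT.
rewrite mulr_sumr -big_split /=; apply: big1 => a aT; rewrite !inE jT andbF.
have aj : a != j by apply: contraFN jT => /eqP <-.
rewrite (sgn_belowD1 _ aT) sgn_belowU1 ?jT //.
rewrite (_ : (j |: T) :\ a = j |: (T :\ a)); last first.
  apply/setP => x; rewrite !inE; case: eqP => // ->.
  by rewrite (negbTE aj) /=; case: (a \in T).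
case: ltngtP => [_|_|e]; try ring.
by move: aj; rewrite -val_eqE /= e eqxx.
Qed.

Lemma cevDZ i (c : F) (f g : cochain F n i) S :
  cev (c *: f + g) S = c * cev f S + cev g S.
Proof. by rewrite /cev; case: insubP => [T _ _|_]; rewrite ?ffunE ?mulr0 ?addr0. Qed.

Lemma cev_insDZ i (c : F) (f g : cochain F n i) j T :
  cev_ins (c *: f + g) j T = c * cev_ins f j T + cev_ins g j T.
Proof. by rewrite /cev_ins; case: ifP => _; rewrite ?cevDZ; ring. Qed.

Lemma cev_val i (f : cochain F n i) (T : ksub n i) : cev f (val T) = f T.
Proof. by rewrite /cev valK. Qed.

Lemma cev_card i (f : cochain F n i) S : #|S| != i -> cev f S = 0.
Proof. by rewrite /cev; case: insubP => // T /= ->. Qed.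

Definition wedge w i (f : cochain F n i) : cochain F n i.+1 :=
  [ffun S => wedge_fun w (cev f) (val S)].

Definition contract j i (f : cochain F n i.+1) : cochain F n i :=
  [ffun T => cev_ins f j (val T)].

Lemma cev_wedge w i (f : cochain F n i) S :
  cev (wedge w f) S = wedge_fun w (cev f) S.
Proof.
rewrite {1}/cev; case: insubP => [T _ <-|hS]; first by rewrite ffunE.
rewrite /wedge_fun; symmetry; apply: big1 => a aS; rewrite cev_card ?mulr0 //.
by move: hS; apply: contra => /eqP H; rewrite (cardsD1 a S) aS H.
Qed.

Lemma cev_contract j i (f : cochain F n i.+1) S :
  cev (contract j f) S = contract_fun j (cev f) S.
Proof.
rewrite {1}/cev; case: insubP => [T _ <-|hS]; first by rewrite ffunE.
rewrite /contract_fun; case: ifP => // jS; rewrite cev_card ?mulr0 //.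
by rewrite cardsU1 jS add1n eqSS.
Qed.

Lemma cev_ins_wedge w i (f : cochain F n i) j T :
  cev_ins (wedge w f) j T = contract_fun j (wedge_fun w (cev f)) T.
Proof. by rewrite /cev_ins cev_wedge. Qed.

Lemma contract_is_linear j i : linear (@contract j i).
Proof.
by move=> c f g; apply/ffunP => T; rewrite !ffunE cev_insDZ.
Qed.

End ExteriorAlgebra.

HB.instance Definition _ (F : fieldType) n j i :=
  GRing.isLinear.Build _ _ _ _ (@contract F n j i) (@contract_is_linear F n j i).

Section LinearAlgebra.
Variable F : fieldType.

Lemma dimv_ker_leq_of_inj (V W : vectType F) (d : 'Hom(V, W)) (T : 'End(V))
    (B : {vspace V}) :
  lker T == 0%VS -> (forall z, z \in lker d -> T z \in B) ->
  (\dim (lker d) <= \dim B)%N.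
Proof.
move=> /eqP T0 dTB.
rewrite -(@limg_dim_eq _ _ _ T (lker d)); last by rewrite T0 capv0.
by apply: dimvS; apply/subvP => _ /memv_imgP[z zk ->]; exact: dTB.
Qed.

Lemma v2r_lfun (V : vectType F) (T : 'End(V)) v : v2r (T v) = v2r v *m f2mx T.
Proof. by rewrite unlock /= r2vK. Qed.

Lemma root_char_poly_lker (V : vectType F) (T : 'End(V)) c :
  lker (T + c *: \1%VF) != 0%VS -> root (char_poly (f2mx T)) (- c).
Proof.
move=> nz; rewrite -eigenvalue_root_char; apply/eigenvalueP.
set v := vpick (lker (T + c *: \1%VF)).
have : v \in lker (T + c *: \1%VF) by exact: memv_pick.
rewrite memv_ker add_lfunE scale_lfunE id_lfunE addr_eq0 => /eqP Tv.
exists (v2r v); first by rewrite -v2r_lfun Tv linearN linearZ /= scaleNr.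
by apply: contra nz => /eqP v0; rewrite -vpick0 -/v -(v2rK v) v0 linear0.
Qed.

End LinearAlgebra.

Definition char_roots (F : closedFieldType) (V : vectType F) (T : 'End(V)) :
    seq F :=
  sval (closed_field_poly_normal (char_poly (f2mx T))).

Lemma mem_char_roots (F : closedFieldType) (V : vectType F) (T : 'End(V)) x :
  root (char_poly (f2mx T)) x -> x \in char_roots T.
Proof.
rewrite /char_roots; case: closed_field_poly_normal => rs /= ->.
by rewrite (monicP (char_poly_monic _)) scale1r root_prod_XsubC.
Qed.

Lemma ce_diff_fun_is_linear (F : fieldType) n (h : lie_alg F n) w i :
  linear (@ce_diff_fun F n h w i).
Proof.
move=> c f g; apply/ffunP => S; rewrite !ffunE [in RHS]/GRing.scale /=.
under eq_bigr => x _ do rewrite cevDZ mulrDr mulrCA.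
rewrite big_split /= -mulr_sumr.
under [X in _ + X = _]eq_bigr => x _ do under eq_bigr => y _ do
  (under eq_bigr => l _ do rewrite cev_insDZ mulrDr mulrCA;
   rewrite big_split /= -mulr_sumr mulrDr mulrCA).
under [X in _ + X = _]eq_bigr => x _ do rewrite big_split /= -mulr_sumr.
by rewrite [X in _ + X = _]big_split /= -mulr_sumr; ring.
Qed.

HB.instance Definition _ (F : fieldType) n (h : lie_alg F n) w i :=
  GRing.isLinear.Build _ _ _ _
    (@ce_diff_fun F n h w i) (@ce_diff_fun_is_linear F n h w i).

Section CartanFormula.
Variables (F : fieldType) (n : nat) (h : lie_alg F n).
Implicit Types (w : 'rV[F]_n) (j : 'I_n).

Lemma ce_diff_fun_twist w i (f : cochain F n i) :
  ce_diff_fun h w f = ce_diff_fun h 0 f + wedge w f.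
Proof.
apply/ffunP => S; rewrite !ffunE [in RHS]big1 ?add0r 1?[LHS]addrC //.
by move=> a _; rewrite mxE mulr0 mul0r.
Qed.

Definition contractL j i : 'Hom(cochain F n i.+1, cochain F n i) :=
  linfun (@contract F n j i).

Definition cartan_op w i j : 'End(cochain F n i) :=
  match i with
  | 0 => contractL j 0 \o ce_diff h w 0
  | k.+1 => (ce_diff h w k \o contractL j k)
            + (contractL j k.+1 \o ce_diff h w k.+1)
  end%VF.

Lemma cartan_op_twist w i j : cartan_op w i j = cartan_op 0 i j + w 0 j *: \1%VF.
Proof.
apply/lfunP => f; case: i f => [|k] f /=;
  rewrite !(add_lfunE, comp_lfunE, scale_lfunE, id_lfunE, lfunE) /=.
- rewrite ce_diff_fun_twist linearD /=; congr (_ + _).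
  apply/ffunP => T; rewrite !ffunE cev_ins_wedge [RHS]/GRing.scale /= -cev_val.
  case: T => S /=; rewrite cards_eq0 => /eqP ->.
  by rewrite -wedge_contract_anticomm [X in _ = _ + X]/wedge_fun big_set0 addr0.
- rewrite (ce_diff_fun_twist w (contract j f)) (ce_diff_fun_twist w f) linearD /=.
  rewrite addrACA; congr (_ + _); apply/ffunP => T; rewrite !ffunE.
  rewrite [RHS]/GRing.scale /= -cev_val -wedge_contract_anticomm addrC.
  rewrite cev_ins_wedge; congr (_ + _).
  by apply: eq_bigr => a _; rewrite cev_contract.
Qed.

Lemma cohom_dim_eq0 w i j :
  lker (cartan_op w i j) == 0%VS -> cohom_dim h w i = 0%N.
Proof.
rewrite /cohom_dim; case: i => [|k] /= inj.
  apply/eqP; rewrite subn0 -leqn0.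
  rewrite (leq_trans (dimv_ker_leq_of_inj (B := 0%VS) inj _)) ?dimv0 // => z.
  rewrite memv_ker => /eqP dz.
  by rewrite comp_lfunE dz linear0 mem0v.
apply/eqP; rewrite subn_eq0; apply: dimv_ker_leq_of_inj inj _ => z.
rewrite memv_ker => /eqP dz.
by rewrite add_lfunE !comp_lfunE dz linear0 addr0 memv_img ?memvf.
Qed.

End CartanFormula.

Section Resonance.
Variables (F : closedFieldType) (n : nat) (h : lie_alg F n).

Definition resonance_coords i : seq F :=
  flatten [seq map -%R (char_roots (cartan_op h 0 i j)) | j <- enum 'I_n].

Lemma resonance_coordsP i w :
  resonance h i 1 w -> forall j, w 0 j \in resonance_coords i.
Proof.
case=> _ r1 j; apply/flatten_mapP; exists j; rewrite ?mem_enum //.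
rewrite -[w 0 j]opprK map_f // mem_char_roots // root_char_poly_lker //.
by rewrite -cartan_op_twist; apply: contraL r1 => /cohom_dim_eq0 ->.
Qed.

End Resonance.

Lemma finite_set_coords (V : nmodType) n (L : seq V) (P : 'rV[V]_n -> Prop) :
  (forall w, P w -> forall j, w 0 j \in L) -> finite_set P.
Proof.
move=> PL; pose row_of (t : {ffun 'I_n -> 'I_(size L)}) := \row_j L`_(t j).
exists (map row_of (enum {ffun 'I_n -> 'I_(size L)})) => w Pw.
have idx (j : 'I_n) : (index (w 0%R j) L < size L)%N by rewrite index_mem PL.
apply/mapP; exists [ffun j => Ordinal (idx j)]; first by rewrite mem_enum.
by apply/rowP => j; rewrite mxE ffunE /= nth_index ?PL.
Qed.

Lemma exists_norm_lower_bound (K : numFieldType) (s : seq K) :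
  exists2 e : K, 0 < e & forall x, x \in s -> x != 0 -> e <= `|x|.
Proof.
elim: s => [|x s [e e0 he]]; first by exists 1.
have [->|x0] := eqVneq x 0.
  by exists e => // y; rewrite in_cons => /orP[/eqP ->|/he//]; rewrite eqxx.
have nx : 0 < `|x| by rewrite normr_gt0.
have ex0 : 0 < e + `|x| by rewrite addr_gt0.
exists (e * `|x| / (e + `|x|)); first by rewrite divr_gt0 // mulr_gt0.
move=> y; rewrite in_cons => /orP[/eqP ->|ys] y0.
  by rewrite ler_pdivrMr // mulrDr mulrC lerDl mulr_ge0.
apply: le_trans (he _ ys y0).
by rewrite ler_pdivrMr // mulrDr lerDr mulr_ge0 // ltW.
Qed.

Lemma isolated_pt_coords (R : rcfType) n (L : seq R[i])
    (P : 'rV[R[i]]_n -> Prop) x :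
  (forall w, P w -> forall j, w 0 j \in L) -> P x -> isolated_pt P x.
Proof.
move=> PL Px; split => //.
have [e e0 he] :=
  exists_norm_lower_bound [seq l - x 0 j | l <- L, j <- enum 'I_n].
exists e; split => // y Py near; apply/rowP => j; apply/eqP; rewrite -subr_eq0.
apply/negPn/negP => yx.
have yxL : y 0 j - x 0 j \in [seq l - x 0 j | l <- L, j <- enum 'I_n].
  by apply: (allpairs_f (fun l j => l - x 0 j)); rewrite ?(PL y) ?mem_enum.
by have := lt_le_trans (near j) (he _ yxL yx); rewrite ltxx.
Qed.

Theorem proposition4p1 (R : realType) (n : nat) (h : lie_alg R[i] n) (i : nat) :
  finite_set (resonance h i 1)
  /\ (cohom_dim h 0 i != 0%N -> isolated_pt (resonance h i 1) 0).
Proof.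
have coords := @resonance_coordsP _ _ h i.
split; first exact: finite_set_coords coords.
move=> H; apply: isolated_pt_coords coords _; split; last by rewrite lt0n.
by move=> x y; apply: big1 => l _; rewrite mxE mulr0.
Qed.
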